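(* Let $H$ be a Hermitian operator on a $d$-dimensional Hilbert space with spectral decomposition $H=\sum_{i=1}^M\lambda_i\Pi_i$, where $M\ge 2$, $\lambda_M>\cdots>\lambda_1$ are the distinct eigenvalues and $\Pi_i$ the spectral projections. Let $\Delta=\lambda_2-\lambda_1$, $d_G=\operatorname{Tr}[\Pi_1]$, and $\varepsilon\in(0,1)$. If $$\beta=\frac{1}{\Delta}\ln\!\left[\left(\frac{1-\varepsilon}{\varepsilon}\right)\left(\frac{d-d_G}{d_G}\right)\right]$$ and $\beta\ge 0$, then $$F\!\left(\frac{e^{-\beta H}}{\operatorname{Tr}[e^{-\beta H}]},\frac{\Pi_1}{\operatorname{Tr}[\Pi_1]}\right)\ge 1-\varepsilon.$$
   Context: The fidelity of states $\rho,\sigma$ is $F(\rho,\sigma)=\|\sqrt{\rho}\sqrt{\sigma}\|_1^2$, where $\|A\|_1=\operatorname{Tr}[\sqrt{A^\dagger A}]$. *)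

(* Hilbert space C^d with C = R[i] (complex numbers over an abstract R : realType). *)
From HB Require Import structures.
From mathcomp Require Import all_boot all_order all_algebra.
From mathcomp Require Import all_classical all_reals all_analysis.
From mathcomp Require Import complex.
Set Implicit Arguments. Unset Strict Implicit. Unset Printing Implicit Defensive.
Import Order.TTheory GRing.Theory Num.Theory.
Import numFieldNormedType.Exports.
Local Open Scope ring_scope.
Local Open Scope sesquilinear_scope.

Section QDefs.
Variables (R : realType) (d : nat).
Local Notation C := R[i].

Definition herm (A : 'M[C]_d) : Prop := A ^t* = A.

Definition psd (A : 'M[C]_d) : Prop :=
  herm A /\ forall v : 'rV[C]_d, 0 <= (v *m A *m v ^t*) 0 0.

(* The (unique) positive semidefinite square root of a PSD matrix A
   (chosen by classical choice; defined for every A, meaningful for PSD A). *)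
Definition psd_sqrt (A : 'M[C]_d) : 'M[C]_d :=
  xget 0 [set X : 'M[C]_d | psd X /\ X *m X = A].

Definition trnorm (A : 'M[C]_d) : C := \tr (psd_sqrt (A ^t* *m A)).

Definition fidelity (rho sigma : 'M[C]_d) : C :=
  (trnorm (psd_sqrt rho *m psd_sqrt sigma)) ^+ 2.

Definition expm (A : 'M[C]_d) : 'M[C]_d :=
  limn (series (fun k : nat => (k`!%:R)^-1 *: iter k (mulmx A) 1%:M)).

End QDefs.

(* Both states are functions of H.  The thermal state is
   sum_i (e^{-beta lambda_i} / Z) Pi_i and the normalised ground projector is
   Pi_0 / d_G, so the two commute, and for commuting states sum_i r_i Pi_i and
   sum_i s_i Pi_i the fidelity is (sum_i sqrt (r_i s_i) Tr Pi_i)^2, which here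
   is the ground-space population e^{-beta lambda_0} d_G / Z.  For beta >= 0
   every excited level weighs at most e^{-beta lambda_1}, so the excited
   population is at most e^{-beta lambda_1} (d - d_G), and beta is chosen to
   make this exactly eps / (1 - eps) times the ground population. *)

From HB Require Import structures.
From mathcomp Require Import all_boot all_order all_algebra.
From mathcomp Require Import all_classical all_reals all_analysis.
From mathcomp Require Import complex.
From mathcomp Require Import ring lra.
Import Order.TTheory GRing.Theory Num.Theory.
Import numFieldNormedType.Exports.
Set Implicit Arguments. Unset Strict Implicit. Unset Printing Implicit Defensive.
Local Open Scope ring_scope.
Local Open Scope complex_scope.

Section Adjoint.
Variable R : realType.
Local Notation C := R[i].
Local Open Scope sesquilinear_scope.

Lemma adjmxM m n p (A : 'M[C]_(m, n)) (B : 'M[C]_(n, p)) :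
  (A *m B)^t* = B^t* *m A^t*.
Proof. by rewrite trmx_mul map_mxM. Qed.

Lemma adjmxD m n (A B : 'M[C]_(m, n)) : (A + B)^t* = A^t* + B^t*.
Proof. by rewrite linearD map_mxD. Qed.

Lemma adjmxZ m n a (A : 'M[C]_(m, n)) : (a *: A)^t* = a^* *: A^t*.
Proof. by rewrite linearZ map_mxZ. Qed.

Lemma mulmx_adj_row_ge0 n (u : 'rV[C]_n) : 0 <= (u *m u^t*) 0 0.
Proof. by rewrite mxE; apply: sumr_ge0 => j _; rewrite !mxE mul_conjC_ge0. Qed.

Lemma mulmx_adj_row_eq0 n (u : 'rV[C]_n) : (u *m u^t*) 0 0 = 0 -> u = 0.
Proof.
rewrite mxE => /eqP; rewrite psumr_eq0 => [/allP u0|j _]; last first.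
  by rewrite !mxE mul_conjC_ge0.
apply/rowP => j; have := u0 j (mem_index_enum j).
by rewrite /= !mxE mul_conjC_eq0 => /eqP.
Qed.

Lemma adjmx_mul_eq0 m n (A : 'M[C]_(m, n)) : A^t* *m A = 0 -> A = 0.
Proof.
move=> AA0; suff Aadj0 : A^t* = 0 by rewrite -(trmxCK A) Aadj0 /= trmx0 map_mx0.
apply/row_matrixP => i; rewrite row0 rowE; apply: mulmx_adj_row_eq0.
by rewrite adjmxM trmxCK mulmxA -(mulmxA (delta_mx 0 i)) AA0 mulmx0 mul0mx mxE.
Qed.

Lemma delta_quad_form n (B : 'M[C]_n) i j :
  ((delta_mx 0 i : 'rV[C]_n) *m B *m (delta_mx 0 j : 'rV[C]_n)^t*) 0 0 = B i j.
Proof. by rewrite trmx_delta map_delta_mx -rowE -colE !mxE. Qed.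

(* Polarization: the values of the form at [e_i + e_j] and [e_i + 'i e_j]
   recover [B i j]. *)
Lemma quad_form_eq0 n (B : 'M[C]_n) :
  (forall v : 'rV[C]_n, (v *m B *m v^t*) 0 0 = 0) -> B = 0.
Proof.
move=> B0; pose f (u w : 'rV[C]_n) := (u *m B *m w^t*) 0 0.
have fD u w : f (u + w) (u + w) = f u u + f u w + f w u + f w w.
  by rewrite /f adjmxD !mulmxDl !mulmxDr !mxE !addrA.
have fZr u w a : f u (a *: w) = a^* * f u w by rewrite /f adjmxZ -scalemxAr mxE.
have fZl u w a : f (a *: u) w = a * f u w by rewrite /f -!scalemxAl mxE.
apply/matrixP => i j; rewrite mxE.
have := B0 (delta_mx 0 i + delta_mx 0 j).
have := B0 (delta_mx 0 i + 'i *: delta_mx 0 j).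
rewrite -!/(f _ _) !fD !fZr !fZl /f !B0 !delta_quad_form !mulr0 !add0r !addr0.
rewrite conjCi mulNr addrC -mulrBr => /eqP.
rewrite mulf_eq0 (negbTE (neq0Ci _)) /= subr_eq0 => /eqP ->.
by move/eqP; rewrite -mulr2n mulrn_eq0 /= => /eqP.
Qed.

Lemma psd_adj_conj n (X D : 'M[C]_n) : psd X -> psd (D^t* *m X *m D).
Proof.
move=> [hX qX]; split; first by rewrite /herm !adjmxM trmxCK hX mulmxA.
move=> v; have DvE : D *m v^t* = (v *m D^t*)^t* by rewrite adjmxM trmxCK.
by rewrite !mulmxA -(mulmxA _ D) DvE.
Qed.

Lemma psd_addr_eq0 n (X Y : 'M[C]_n) : psd X -> psd Y -> X + Y = 0 -> X = 0.
Proof.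
move=> [_ qX] [_ qY] XY0; apply: quad_form_eq0 => v.
have : (v *m X *m v^t* + v *m Y *m v^t*) 0 0 = 0.
  by rewrite -mulmxDl -mulmxDr XY0 mulmx0 mul0mx mxE.
by rewrite mxE => /eqP; rewrite paddr_eq0 // => /andP[/eqP].
Qed.

Lemma herm_cube_eq0 n (D : 'M[C]_n) : herm D -> D *m D *m D = 0 -> D = 0.
Proof.
move=> hD D3; have D2 : D *m D = 0.
  by apply: adjmx_mul_eq0; rewrite adjmxM hD mulmxA D3 mul0mx.
by apply: adjmx_mul_eq0; rewrite hD.
Qed.

(* With [D := X - Y], commutation gives [D (X + Y) = 0], so the PSD matrices
   [D X D] and [D Y D] sum to zero; both vanish and [D^3 = 0]. *)
Lemma psd_sqrt_comm_uniq n (X Y : 'M[C]_n) :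
  psd X -> psd Y -> X *m Y = Y *m X -> X *m X = Y *m Y -> X = Y.
Proof.
move=> pX pY XY XX; have [D DE] : {D | D = X - Y} by exists (X - Y).
have hD : herm D by rewrite /herm DE linearB map_mxB /= pX.1 pY.1.
have D0 : D *m (X + Y) = 0.
  by rewrite DE mulmxDr !mulmxBl XX XY addrA subrK subrr.
have DZD_psd Z : psd Z -> psd (D *m Z *m D).
  by move=> pZ; rewrite -{1}hD; exact: psd_adj_conj.
have DXYD : D *m X *m D + D *m Y *m D = 0.
  by rewrite -mulmxDl -mulmxDr D0 mul0mx.
have DXD := psd_addr_eq0 (DZD_psd _ pX) (DZD_psd _ pY) DXYD.
have DYD : D *m Y *m D = 0.
  by apply: psd_addr_eq0 (DZD_psd _ pY) (DZD_psd _ pX) _; rewrite addrC.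
have D3 : D *m D *m D = 0 by rewrite {2}DE mulmxBr mulmxBl DXD DYD subrr.
by apply/eqP; rewrite -subr_eq0 -DE; apply/eqP/herm_cube_eq0.
Qed.

End Adjoint.

Definition thermal_state (R : realType) n (A : 'M[R[i]]_n) (beta : R) :=
  (\tr (expm (- beta%:C *: A)))^-1 *: expm (- beta%:C *: A).

Section Spectral.
Variables (R : realType) (n M : nat) (P : nat -> 'M[R[i]]_n).
Local Notation C := R[i].
Local Open Scope sesquilinear_scope.
Local Open Scope classical_set_scope.

Lemma cvg_real_complex (u : nat -> R) (l : R) :
  u @ \oo --> l ->
  (fun k => (u k)%:C : (C : numFieldType)) @ \oo -->
    (l%:C : (C : numFieldType)).
Proof.
move=> /cvgrPdist_lt ul; apply/cvgrPdist_lt => -[a b].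
rewrite ltcE /= => /andP[/eqP -> a0]; near=> k.
rewrite -rmorphB normc_def /= expr0n addr0 sqrtr_sqr ltcR.
by near: k; exact: ul.
Unshelve. all: by end_near.
Qed.

Hypothesis P_herm : forall i, (i < M)%N -> herm (P i).
Hypothesis P_idem : forall i, (i < M)%N -> P i *m P i = P i.
Hypothesis P_orth :
  forall i j, (i < M)%N -> (j < M)%N -> i <> j -> P i *m P j = 0.
Hypothesis P_sum1 : \sum_(i < M) P i = 1%:M.

Implicit Types r s : nat -> R.

Definition spectral r : 'M[C]_n := \sum_(i < M) (r i)%:C *: P i.

Definition proj_dim i := complex.Re (\tr (P i)).

Lemma eq_spectral r s : (forall i : 'I_M, r i = s i) -> spectral r = spectral s.
Proof. by move=> rs; apply: eq_bigr => i _; rewrite rs. Qed.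

Lemma proj_mulmx_spectral (k : 'I_M) r : P k *m spectral r = (r k)%:C *: P k.
Proof.
rewrite mulmx_sumr (bigD1 k) //= big1 ?addr0 => [|i ik].
  by rewrite -scalemxAr P_idem.
rewrite -scalemxAr P_orth ?scaler0 // => ki.
by move: ik; rewrite -(inj_eq val_inj) /= ki eqxx.
Qed.

Lemma spectral_mulmx_proj (k : 'I_M) r : spectral r *m P k = (r k)%:C *: P k.
Proof.
rewrite mulmx_suml (bigD1 k) //= big1 ?addr0 => [|i ik].
  by rewrite -scalemxAl P_idem.
rewrite -scalemxAl P_orth ?scaler0 // => ik'.
by move: ik; rewrite -(inj_eq val_inj) /= ik' eqxx.
Qed.

Lemma spectral_mul r s :
  spectral r *m spectral s = spectral (fun i => r i * s i).
Proof.
rewrite {1}/spectral mulmx_suml; apply: eq_bigr => i _.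
by rewrite -scalemxAl proj_mulmx_spectral scalerA rmorphM.
Qed.

Lemma spectral1 : spectral (fun=> 1) = 1%:M.
Proof. by rewrite -P_sum1; apply: eq_bigr => i _; rewrite scale1r. Qed.

Lemma spectral_iter_mul r k :
  iter k (mulmx (spectral r)) 1%:M = spectral (fun i => r i ^+ k).
Proof.
elim: k => [|k IHk] /=; first by rewrite -spectral1; apply: eq_spectral.
by rewrite IHk spectral_mul; apply: eq_spectral => i; rewrite exprS.
Qed.

Lemma spectralZ a r : a%:C *: spectral r = spectral (fun i => a * r i).
Proof.
by rewrite scaler_sumr; apply: eq_bigr => i _; rewrite scalerA rmorphM.
Qed.

Lemma spectral_proj (k : 'I_M) : spectral (fun i => (i == k)%:R) = P k.
Proof.
rewrite /spectral (bigD1 k) //= eqxx scale1r big1 ?addr0 // => i ik.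
by rewrite val_eqE (negbTE ik) scale0r.
Qed.

Lemma spectral_adj r : (spectral r)^t* = spectral r.
Proof.
rewrite linear_sum map_mx_sum; apply: eq_bigr => i _.
by rewrite adjmxZ P_herm //; congr (_ *: _); exact: conjc_real.
Qed.

Lemma proj_quad_ge0 (k : 'I_M) (v : 'rV[C]_n) : 0 <= (v *m P k *m v^t*) 0 0.
Proof.
rewrite -P_idem // -{2}P_herm // mulmxA -(mulmxA _ _ (_ ^t*)) -adjmxM.
exact: mulmx_adj_row_ge0.
Qed.

Lemma spectral_psd r : (forall i : 'I_M, 0 <= r i) -> psd (spectral r).
Proof.
move=> r_ge0; split=> [|v]; first exact: spectral_adj.
rewrite mulmx_sumr mulmx_suml summxE; apply: sumr_ge0 => i _.
by rewrite -scalemxAr -scalemxAl mxE mulr_ge0 ?proj_quad_ge0 // ler0c r_ge0.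
Qed.

(* Every matrix commuting with [spectral r] is block diagonal for the
   partition of the projections by the value of [r]. *)
Lemma comm_spectral_comp (f : R -> R) r (X : 'M[C]_n) :
  X *m spectral r = spectral r *m X ->
  X *m spectral (f \o r) = spectral (f \o r) *m X.
Proof.
move=> Xr.
have blockE (i j : 'I_M) :
    (f (r j))%:C *: (P i *m X *m P j) = (f (r i))%:C *: (P i *m X *m P j).
  have [-> // | rij] := eqVneq (r i) (r j).
  suff -> : P i *m X *m P j = 0 by rewrite !scaler0.
  have Li : P i *m spectral r *m X *m P j = (r i)%:C *: (P i *m X *m P j).
    by rewrite proj_mulmx_spectral -!scalemxAl.
  have Rj : P i *m X *m spectral r *m P j = (r j)%:C *: (P i *m X *m P j).
    by rewrite -mulmxA spectral_mulmx_proj -scalemxAr.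
  have : (r i)%:C *: (P i *m X *m P j) = (r j)%:C *: (P i *m X *m P j).
    by rewrite -Li -Rj; congr (_ *m _); rewrite -!mulmxA Xr.
  move/eqP; rewrite -subr_eq0 -scalerBl scaler_eq0 subr_eq0.
  by rewrite (inj_eq (@complexI R)) (negbTE rij) => /eqP.
have -> : X = \sum_(i < M) \sum_(j < M) P i *m X *m P j.
  rewrite -[LHS]mul1mx -[LHS]mulmx1 -P_sum1 !mulmx_suml.
  by apply: eq_bigr => i _; rewrite !mulmx_sumr.
rewrite mulmx_suml mulmx_sumr; apply: eq_bigr => i _.
rewrite mulmx_suml mulmx_sumr; apply: eq_bigr => j _.
rewrite -mulmxA proj_mulmx_spectral !mulmxA spectral_mulmx_proj.
by rewrite -scalemxAr -!scalemxAl /= blockE.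
Qed.

Lemma psd_sqrt_spectral r : (forall i : 'I_M, 0 <= r i) ->
  psd_sqrt (spectral r) = spectral (fun i => Num.sqrt (r i)).
Proof.
move=> r_ge0; set sqrt_r := spectral (fun i => Num.sqrt (r i)).
have sqrt_psd : psd sqrt_r by apply: spectral_psd => i; rewrite sqrtr_ge0.
have sqrtK : sqrt_r *m sqrt_r = spectral r.
  by rewrite spectral_mul; apply: eq_spectral => i; rewrite -expr2 sqr_sqrtr.
apply: xget_unique => // Y [Y_psd YY].
apply: psd_sqrt_comm_uniq; rewrite ?sqrtK //.
by apply: (@comm_spectral_comp Num.sqrt); rewrite -YY mulmxA.
Qed.

Lemma expm_spectral r : expm (spectral r) = spectral (fun i => expR (r i)).
Proof.
have partialE :
    series (fun k => (k`!%:R)^-1 *: iter k (mulmx (spectral r)) 1%:M) =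
    fun N => spectral (fun i => series (exp_coeff (r i)) N).
  apply/funext => N; rewrite /series /=.
  transitivity (\sum_(0 <= k < N) \sum_(i < M) (exp_coeff (r i) k)%:C *: P i).
    apply: eq_bigr => k _; rewrite spectral_iter_mul scaler_sumr.
    apply: eq_bigr => i _; rewrite scalerA; congr (_ *: _).
    by rewrite /exp_coeff /= rmorphM fmorphV rmorph_nat mulrC.
  rewrite exchange_big /=; apply: eq_bigr => i _.
  by rewrite rmorph_sum scaler_suml.
rewrite /expm partialE; apply: (cvg_lim (@norm_hausdorff _ _)).
apply: cvg_big => //; first exact: add_continuous.
move=> i _; apply: cvgZr_tmp; apply: cvg_real_complex.
exact: is_cvg_series_exp_coeff.
Qed.

Lemma proj_diagE (k : 'I_M) j :
  let u : 'rV[C]_n := delta_mx 0 j *m P k in P k j j = (u *m u^t*) 0 0.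
Proof.
rewrite /= adjmxM P_herm // mulmxA -[_ *m P k *m P k]mulmxA P_idem //.
by rewrite delta_quad_form.
Qed.

Lemma mxtrace_proj_ge0 (k : 'I_M) : 0 <= \tr (P k).
Proof. by apply: sumr_ge0 => j _; rewrite proj_diagE mulmx_adj_row_ge0. Qed.

Lemma mxtrace_proj (k : 'I_M) : \tr (P k) = (proj_dim k)%:C.
Proof. by rewrite /proj_dim RRe_real // ger0_real // mxtrace_proj_ge0. Qed.

Lemma proj_dim_ge0 (k : 'I_M) : 0 <= proj_dim k.
Proof. by rewrite -lecR -mxtrace_proj mxtrace_proj_ge0. Qed.

Lemma proj_dim_gt0 (k : 'I_M) : P k != 0 -> 0 < proj_dim k.
Proof.
move=> Pk0; rewrite -ltcR -mxtrace_proj lt_def mxtrace_proj_ge0 andbT.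
apply: contra Pk0; rewrite psumr_eq0 => [/allP Pjj0|j _]; last first.
  by rewrite proj_diagE mulmx_adj_row_ge0.
apply/eqP/row_matrixP => j; rewrite row0 rowE; apply: mulmx_adj_row_eq0.
by rewrite -proj_diagE; apply/eqP/Pjj0/mem_index_enum.
Qed.

Lemma sum_proj_dim : \sum_(i < M) proj_dim i = n%:R.
Proof.
have := mxtrace1 C n; rewrite -P_sum1 raddf_sum => trE.
apply: (@complexI R); rewrite rmorph_sum rmorph_nat -trE.
by apply: eq_bigr => i _; exact/esym/mxtrace_proj.
Qed.

Lemma mxtrace_spectral r :
  \tr (spectral r) = (\sum_(i < M) r i * proj_dim i)%:C.
Proof.
rewrite raddf_sum rmorph_sum; apply: eq_bigr => i _.
rewrite rmorphM; transitivity ((r i)%:C * \tr (P i)); first exact: mxtraceZ.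
by rewrite mxtrace_proj.
Qed.

Lemma fidelity_spectral r s :
  (forall i : 'I_M, 0 <= r i) -> (forall i : 'I_M, 0 <= s i) ->
  fidelity (spectral r) (spectral s) =
    ((\sum_(i < M) Num.sqrt (r i) * Num.sqrt (s i) * proj_dim i) ^+ 2)%:C.
Proof.
move=> r_ge0 s_ge0; set q := fun i => Num.sqrt (r i) * Num.sqrt (s i).
have q_ge0 i : 0 <= q i by rewrite mulr_ge0 ?sqrtr_ge0.
rewrite /fidelity /trnorm !psd_sqrt_spectral // spectral_mul -/q.
rewrite spectral_adj spectral_mul psd_sqrt_spectral => [|i]; last first.
  by rewrite mulr_ge0.
rewrite (@eq_spectral _ q) => [|i]; last by rewrite -expr2 sqrtr_sqr ger0_norm.
by rewrite mxtrace_spectral rmorphXn.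
Qed.

Lemma fidelity_thermal_proj (lam : nat -> R) (beta : R) (k : 'I_M) :
  P k != 0 ->
  fidelity (thermal_state (spectral lam) beta) ((\tr (P k))^-1 *: P k) =
    (expR (- beta * lam k) * proj_dim k /
       \sum_(i < M) expR (- beta * lam i) * proj_dim i)%:C.
Proof.
move=> Pk0; have dk_gt0 := proj_dim_gt0 Pk0.
set Z := \sum_(i < M) _.
have Z_gt0 : 0 < Z.
  rewrite /Z (bigD1 k) //=; apply: ltr_pwDl.
    by rewrite mulr_gt0 ?expR_gt0.
  by apply: sumr_ge0 => i _; rewrite mulr_ge0 ?expR_ge0 ?proj_dim_ge0.
rewrite /thermal_state -rmorphN spectralZ expm_spectral mxtrace_spectral -/Z.
rewrite -fmorphV spectralZ mxtrace_proj -fmorphV -(spectral_proj k) spectralZ.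
rewrite fidelity_spectral => [|i|i]; first last.
- by rewrite mulr_ge0 ?ler0n // invr_ge0 ltW.
- by rewrite mulr_ge0 ?expR_ge0 // invr_ge0 ltW.
congr _%:C; rewrite (bigD1 k) //= eqxx mulr1 big1 ?addr0 => [|i ik]; last first.
  by rewrite val_eqE (negbTE ik) mulr0 sqrtr0 mulr0 mul0r.
rewrite !exprMn !sqr_sqrtr ?mulr_ge0 ?invr_ge0 ?expR_ge0 //;
  rewrite ?(ltW dk_gt0) ?(ltW Z_gt0) //.
by field; rewrite (gt_eqF Z_gt0) (gt_eqF dk_gt0).
Qed.

End Spectral.

Section Boltzmann.
Variable R : realType.

Lemma sum_boltzmann_le (I : finType) (beta a : R) (lam tau : I -> R) :
  0 <= beta -> (forall i, a <= lam i) -> (forall i, 0 <= tau i) ->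
  \sum_i expR (- beta * lam i) * tau i <= expR (- beta * a) * \sum_i tau i.
Proof.
move=> beta_ge0 a_le tau_ge0; rewrite mulr_sumr; apply: ler_sum => i _.
by rewrite ler_wpM2r // ler_expR !mulNr lerN2 ler_wpM2l.
Qed.

(* For [S > 0] this choice of [beta] makes both sides equal; for [S = 0] the
   logarithm is a junk value but the bound is trivial. *)
Lemma thermal_balance_le (a0 a1 t0 S eps beta : R) :
  a0 < a1 -> 0 < t0 -> 0 <= S -> 0 < eps < 1 ->
  beta = (a1 - a0)^-1 * ln (((1 - eps) / eps) * (S / t0)) ->
  (1 - eps) * (expR (- beta * a1) * S) <= eps * (expR (- beta * a0) * t0).
Proof.
move=> a01 t0_gt0 S_ge0 /andP[eps_gt0 eps_lt1] ->.
have [-> | S_neq0] := eqVneq S 0.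
  by rewrite !mulr0 mulr_ge0 ?mulr_ge0 ?expR_ge0 ?ltW.
have K_gt0 : 0 < ((1 - eps) / eps) * (S / t0).
  by rewrite !mulr_gt0 ?invr_gt0 ?subr_gt0 // lt_def S_neq0.
have -> : - ((a1 - a0)^-1 * ln ((1 - eps) / eps * (S / t0))) * a1 =
    - ((a1 - a0)^-1 * ln ((1 - eps) / eps * (S / t0))) * a0
    - ln ((1 - eps) / eps * (S / t0)).
  by field; rewrite gt_eqF ?subr_gt0.
rewrite expRD expRN lnK ?posrE // le_eqVlt; apply/orP; left; apply/eqP.
by field; rewrite S_neq0 !gt_eqF ?subr_gt0.
Qed.

Lemma ground_weight_ge (g W B eps : R) :
  0 < eps < 1 -> 0 < g -> 0 <= W -> W <= B -> (1 - eps) * B <= eps * g ->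
  1 - eps <= g / (g + W).
Proof.
move=> /andP[eps_gt0 eps_lt1] g_gt0 W_ge0 WB balance.
rewrite ler_pdivlMr ?ltr_pwDl //.
have : (1 - eps) * W <= (1 - eps) * B by rewrite ler_wpM2l // subr_ge0 ltW.
lra.
Qed.

End Boltzmann.

Theorem corollary2 (R : realType) (d M : nat) (H : 'M[R[i]]_d)
    (lambda : nat -> R) (Pi : nat -> 'M[R[i]]_d) (eps beta : R) :
  (2 <= M)%N ->
  herm H ->
  (* spectral decomposition H = sum_i lambda_i Pi_i with distinct eigenvalues *)
  (forall i j, (i < j < M)%N -> lambda i < lambda j) ->
  (forall i, (i < M)%N -> herm (Pi i) /\ Pi i *m Pi i = Pi i /\ Pi i != 0) ->
  (forall i j, (i < M)%N -> (j < M)%N -> i <> j -> Pi i *m Pi j = 0) ->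
  \sum_(i < M) Pi i = 1%:M ->
  H = \sum_(i < M) (lambda i)%:C *: Pi i ->
  0 < eps < 1 ->
  beta = (lambda 1%N - lambda 0%N)^-1 *
         ln (((1 - eps) / eps) *
             ((d%:R - complex.Re (\tr (Pi 0%N))) / complex.Re (\tr (Pi 0%N)))) ->
  0 <= beta ->
  (1 - eps)%:C <=
    fidelity ((\tr (expm (- beta%:C *: H)))^-1 *: expm (- beta%:C *: H))
             ((\tr (Pi 0%N))^-1 *: Pi 0%N).
Proof.
move=> M_ge2 _ lam_lt Pi_spec Pi_orth Pi_sum1 -> eps01 beta_def beta_ge0.
case: M M_ge2 lam_lt Pi_spec Pi_orth Pi_sum1 => [|[|m]] // _ lam_lt Pi_spec.
move=> Pi_orth Pi_sum1.
have Pi_herm i (lt_iM : (i < m.+2)%N) := (Pi_spec i lt_iM).1.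
have Pi_idem i (lt_iM : (i < m.+2)%N) := (Pi_spec i lt_iM).2.1.
have Pi0_neq0 : Pi 0%N != 0 := (Pi_spec 0%N isT).2.2.
have dim_ge0 := proj_dim_ge0 Pi_herm Pi_idem.
have dim0_gt0 : 0 < proj_dim Pi 0.
  exact: (proj_dim_gt0 Pi_herm Pi_idem (k := ord0)).
rewrite -/(thermal_state _ beta) -/(spectral _ Pi lambda).
rewrite (fidelity_thermal_proj Pi_herm Pi_idem Pi_orth Pi_sum1 _ _ (k := ord0)) //.
rewrite lecR big_ord_recl.
set S := \sum_(i < m.+1) proj_dim Pi (lift ord0 i).
apply: (@ground_weight_ge _ _ _ (expR (- beta * lambda 1%N) * S)) => //.
- exact: mulr_gt0 (expR_gt0 _) dim0_gt0.
- by apply: sumr_ge0 => i _; rewrite mulr_ge0 ?expR_ge0 ?dim_ge0.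
- apply: sum_boltzmann_le => // i; case: i => [[|i] lt_i] //=.
  by apply/ltW/lam_lt.
- apply: thermal_balance_le => //; first exact: lam_lt.
  + by apply: sumr_ge0 => i _; exact: dim_ge0.
  + rewrite beta_def -(sum_proj_dim Pi_herm Pi_idem Pi_sum1) big_ord_recl.
    by congr (_ * ln (_ * (_ / _))); rewrite addrC addKr.
Qed.
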